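(* Let $M$ be a commutative monoid with identity $e$ and $\mathcal{A}$ an $\mathbb{H}M$-module. For every $r\ge1$, $H^0(M,r;\mathcal{A})\cong\mathcal{A}(e)$.
   Context: Let $M$ be a commutative monoid with identity $e$. $\mathbb{H}M$ has objects the elements of $M$ and morphisms $(x,y):x\to xy$, composition $(xy,z)(x,y)=(x,yz)$. An $\mathbb{H}M$-module $\mathcal{A}$ is a functor $\mathbb{H}M\to\mathbf{Ab}$: groups $\mathcal{A}(x)$ with $y_*:\mathcal{A}(x)\to\mathcal{A}(xy)$, $y_*z_*=(yz)_*$, $e_*=\mathrm{id}$. Tensor product $(\mathcal{A}\otimes_{\mathbb{H}M}\mathcal{B})(x)=\bigoplus_{zt=x}\mathcal{A}(z)\otimes\mathcal{B}(t)/(u_*a\otimes b=a\otimes u_*b)$; unit the constant module $\mathbb{Z}$; chain complexes of $\mathbb{H}M$-modules form a symmetric monoidal category with Koszul signs. A commutative DGA-algebra over $\mathbb{H}M$ is a commutative monoid $(\mathcal{A},\circ,\iota)$ there with a monoid morphism $\epsilon:\mathcal{A}\to\mathbb{Z}$, $\epsilon_x(a)=\tilde\epsilon(a)x$. Its reduced bar construction $\mathbf{B}(\mathcal{A})$ has $\mathbf{B}(\mathcal{A})_n(x)$ generated by $[\,]$ (degree $0$) and $[a_1|\cdots|a_p]$ with $a_i\in(\mathrm{coker}\,\iota)_{r_i}(x_i)$, $x_1\cdots x_p=x$, $p+\sum r_i=n$; differential $\partial[a_1|\cdots|a_p]=-\sum_i(-1)^{e_{i-1}}[\cdots|\partial a_i|\cdots]+\tilde\epsilon(a_1)x_{1*}[a_2|\cdots]+\sum_{i<p}(-1)^{e_i}[\cdots|a_i\circ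 a_{i+1}|\cdots]+(-1)^{e_p}\tilde\epsilon(a_p)x_{p*}[\cdots|a_{p-1}]$, $e_i=i+r_1+\cdots+r_i$; multiplication the signed shuffle product $[a_1|\cdots|a_p]\circ[a_{p+1}|\cdots|a_{p+q}]=\sum_\sigma(-1)^{e(\sigma)}[a_{\sigma^{-1}(1)}|\cdots|a_{\sigma^{-1}(p+q)}]$, $e(\sigma)=\sum_{\sigma(i)>\sigma(p+j)}(1+r_i)(1+r_{p+j})$; unit $[\,]$; augmentation $\mathbf{B}(\mathcal{A})_0\cong\mathbb{Z}$. It is again such an algebra, so $\mathbf{B}^r$ is defined. $\mathcal{Z}M$: $\mathcal{Z}M(x)$ free abelian on $\{(u,v):uv=x\}$, $y_*(u,v)=(yu,v)$, $(u,v)\circ(w,t)=(uw,vt)$, unit $(e,e)$, degree $0$, augmentation $(u,v)\mapsto$ generator of $\mathbb{Z}(x)$. $H^n(M,r;\mathcal{A})=H^n(\mathrm{Hom}_{\mathbb{H}M}(\mathbf{B}^r(\mathcal{Z}M),\mathcal{A}))$. *)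

From HB Require Import structures.
From mathcomp Require Import all_boot all_order all_algebra.
From mathcomp Require Import boolp.
Set Implicit Arguments.
Unset Strict Implicit.
Unset Printing Implicit Defensive.
Import GRing.Theory.
Local Open Scope ring_scope.

Record comMonoid := ComMonoid {
  cm_car :> Type;
  cm_op : cm_car -> cm_car -> cm_car;
  cm_e : cm_car;
  cm_assoc : forall x y z, cm_op x (cm_op y z) = cm_op (cm_op x y) z;
  cm_comm : forall x y, cm_op x y = cm_op y x;
  cm_unitl : forall x, cm_op cm_e x = x }.
Arguments cm_op {_}.
Arguments cm_e {_}.

(* HM-modules: functors HM -> Ab.  The morphism (x,y) : x -> xy of HM is
   encoded by y together with a proof that x*y = z (z the target), which
   avoids transport along equalities of objects.                         *)
Record HMmodule (M : comMonoid) := HMModule {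
  hm_car :> M -> zmodType;
  hm_act : forall x y z : M, cm_op x y = z -> hm_car x -> hm_car z;
  hm_act_add : forall x y z (h : cm_op x y = z) (a b : hm_car x),
      hm_act h (a + b) = hm_act h a + hm_act h b;
  hm_act_id : forall x (h : cm_op x cm_e = x) (a : hm_car x), hm_act h a = a;
  hm_act_comp : forall x y z u w (h1 : cm_op x y = z) (h2 : cm_op z u = w)
      (h3 : cm_op x (cm_op y u) = w) (a : hm_car x),
      hm_act h2 (hm_act h1 a) = hm_act h3 a }.

(* Formal Z-linear combinations (elements of free abelian groups).      *)
Definition comb (T : Type) := seq (int * T).
Definition csingle T (a : T) : comb T := [:: (1%R, a)].
Definition cscale T (k : int) (c : comb T) : comb T :=
  map (fun p => (k * p.1, p.2)) c.
Definition cbind T U (c : comb T) (f : T -> comb U) : comb U :=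
  flatten (map (fun p => cscale p.1 (f p.2)) c).
Definition cmap T U (f : T -> U) (c : comb T) : comb U :=
  map (fun p => (p.1, f p.2)) c.
Definition csub T (c d : comb T) : comb T := c ++ cscale (-1) d.
Definition sgn (k : nat) : int := (-1) ^+ k.

Definition ceval (T : Type) (V : zmodType) (f : T -> V) (c : comb T) : V :=
  \sum_(p <- c) (f p.2) *~ p.1.

(* Commutative DGA-algebras over HM, given by a presentation: for each
   object x and degree n, a generating set G x n of the abelian group
   A_n(x) together with a set of generating relations; the structure maps
   are given on generators (and extended linearly).
     push  : y_* : A_n(x) -> A_n(xy)
     dif   : differential A_{n+1}(x) -> A_n(x)
     mul   : A_m(x) (x) A_n(y) -> A_{m+n}(xy)
     unit  : iota_x(1) in A_0(x)  (iota : Z -> A)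
     aug   : epsilon-tilde on degree-0 generators (epsilon vanishes in
             positive degrees).                                          *)
Record pdga (M : comMonoid) := PDGA {
  G : M -> nat -> Type;
  rel : forall x n, comb (G x n) -> Prop;
  push : forall x y n, G x n -> comb (G (cm_op x y) n);
  dif : forall x n, G x n.+1 -> comb (G x n);
  mul : forall x y m n, G x m -> G y n -> comb (G (cm_op x y) (m + n));
  unit : forall x, comb (G x 0);
  aug : forall x, G x 0 -> int }.
Arguments G {M} p x n.
Arguments rel {M} p {x n} c.
Arguments push {M} p {x} y {n} g.
Arguments dif {M} p {x n} g.
Arguments mul {M} p {x y m n} g h.
Arguments unit {M} p x.
Arguments aug {M} p {x} g.

Section Bar.
Variable M : comMonoid.
Variable P : pdga M.

(* A generator of coker(iota) somewhere: object, degree, generator. *)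
Definition gen := {y : M & {k : nat & G P y k}}.
Definition gobj (a : gen) : M := projT1 a.
Definition gdeg (a : gen) : nat := projT1 (projT2 a).

Definition glift y k (c : comb (G P y k)) : comb gen :=
  cmap (fun g => existT _ y (existT _ k g)) c.
Definition gpush (u : M) (a : gen) : comb gen :=
  let: existT y (existT k g) := a in glift (push P u g).
Definition gdif (a : gen) : comb gen :=
  let: existT y (existT k g) := a in
  match k return G P y k -> comb gen with
  | 0 => fun _ => [::]
  | k'.+1 => fun g => glift (dif P g)
  end g.
Definition gmul (a b : gen) : comb gen :=
  let: existT y (existT k g) := a in
  let: existT y' (existT k' g') := b in glift (mul P g g').
Definition gaug (a : gen) : int :=
  let: existT y (existT k g) := a in
  match k return G P y k -> int with
  | 0 => fun g => aug P g
  | _.+1 => fun _ => 0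
  end g.

Definition prodM (s : seq M) : M := foldr (fun a b => cm_op a b) cm_e s.
Definition wt (s : seq gen) : nat := size s + sumn (map gdeg s).

(* Raw bar words [a_1|...|a_p] and their multilinear combinations. *)
Definition wcons (c : comb gen) (d : comb (seq gen)) : comb (seq gen) :=
  flatten (map (fun p => map (fun q => (p.1 * q.1, p.2 :: q.2)) d) c).
Definition tens (cs : seq (comb gen)) : comb (seq gen) :=
  foldr wcons (csingle [::]) cs.
Definition word (pre : seq gen) (mid : seq (comb gen)) (suf : seq gen) :=
  tens (map (@csingle _) pre ++ mid ++ map (@csingle _) suf).

Definition rpush (u : M) (s : seq gen) : comb (seq gen) :=
  match s with
  | [::] => csingle [::]
  | a :: s' => word [::] [:: gpush u a] s'
  end.

Fixpoint splits (s : seq gen) : seq (seq gen * gen * seq gen) :=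
  match s with
  | [::] => [::]
  | a :: s' => ([::], a, s') :: map (fun t => (a :: t.1.1, t.1.2, t.2)) (splits s')
  end.
Fixpoint splits2 (s : seq gen) : seq (seq gen * gen * gen * seq gen) :=
  match s with
  | a :: ((b :: s'') as s') =>
      ([::], a, b, s'') ::
      map (fun t => (a :: t.1.1.1, t.1.1.2, t.1.2, t.2)) (splits2 s')
  | _ => [::]
  end.

(* The bar differential on raw words, e_i = i + r_1 + ... + r_i. *)
Definition rdif (s : seq gen) : comb (seq gen) :=
  (* - sum_i (-1)^{e_{i-1}} [ ... | d a_i | ... ] *)
  flatten (map (fun t => cscale (- sgn (wt t.1.1))
                                (word t.1.1 [:: gdif t.1.2] t.2)) (splits s))
  (* + eps(a_1) x_1* [a_2|...|a_p] *)
  ++ (match s with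
      | [::] => [::]
      | a :: s' => cscale (gaug a) (rpush (gobj a) s')
      end)
  (* + sum_{i<p} (-1)^{e_i} [ ... | a_i a_{i+1} | ... ] *)
  ++ flatten (map (fun t => cscale (sgn (wt (rcons t.1.1.1 t.1.1.2)))
                     (word t.1.1.1 [:: gmul t.1.1.2 t.1.2] t.2)) (splits2 s))
  (* + (-1)^{e_p} eps(a_p) x_p* [a_1|...|a_{p-1}] *)
  ++ flatten (map (fun t => match t.2 with
                     | [::] => cscale (sgn (wt s) * gaug t.1.2)
                                      (rpush (gobj t.1.2) t.1.1)
                     | _ => [::] end) (splits s)).

(* Signed shuffle product on raw words:
   sign (-1)^{sum_{sigma(i) > sigma(p+j)} (1+r_i)(1+r_{p+j})}. *)
Fixpoint shuffle (s : seq gen) : seq gen -> comb (seq gen) :=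
  match s with
  | [::] => fun t => csingle t
  | a :: s' =>
      fix shuffle_t (t : seq gen) : comb (seq gen) :=
        match t with
        | [::] => csingle (a :: s')
        | b :: t' =>
            cmap (cons a) (shuffle s' (b :: t'))
            ++ cscale (sgn ((1 + gdeg b) * wt (a :: s'))%N)
                      (cmap (cons b) (shuffle_t t'))
        end
  end.

(* Generators of B(A)_n(x): [] (degree 0, every x), and words
   [a_1|...|a_p] (p >= 1) with x_1...x_p = x and p + sum r_i = n. *)
Definition bconstr (x : M) (n : nat) (s : seq gen) : Prop :=
  wt s = n /\ (match s with [::] => True | _ => prodM (map gobj s) = x end).
Definition BG (x : M) (n : nat) := {s : seq gen | bconstr x n s}.

Definition bmk (x : M) (n : nat) (s : seq gen) : comb (BG x n) :=
  match pselect (bconstr x n s) with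
  | left h => csingle (exist _ s h)
  | right _ => [::]
  end.
Definition blift x n (c : comb (seq gen)) : comb (BG x n) := cbind c (bmk x n).

(* Generating relations of B(A) = (+)_p coker(iota)^{(x)_HM p}:
   relations of a factor, the unit relation iota(1) = 0 of coker(iota),
   and the HM-balancing relations [..|u_*a|b|..] = [..|a|u_*b|..]. *)
Inductive rawrel : comb (seq gen) -> Prop :=
  | rr_factor pre suf y k (r : comb (G P y k)) :
      rel P r -> rawrel (word pre [:: glift r] suf)
  | rr_unit pre suf y : rawrel (word pre [:: glift (unit P y)] suf)
  | rr_balance pre suf (u : M) (a b : gen) :
      rawrel (csub (word pre [:: gpush u a; csingle b] suf)
                   (word pre [:: csingle a; gpush u b] suf)).

Definition Bar : pdga M := {|
  G := BG;
  rel := fun x n c => exists2 R, rawrel R & c = blift x n R;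
  push := fun x y n g => blift (cm_op x y) n (rpush y (sval g));
  dif := fun x n g => blift x n (rdif (sval g));
  mul := fun x y m n g h => blift (cm_op x y) (m + n) (shuffle (sval g) (sval h));
  unit := fun x => bmk x 0 [::];
  aug := fun x g => match sval g with [::] => 1 | _ => 0 end |}.

End Bar.

Section ZM.
Variable M : comMonoid.

Definition ZG (x : M) (n : nat) := {uv : M * M | n = 0%N /\ cm_op uv.1 uv.2 = x}.
Definition zmk (x : M) (n : nat) (uv : M * M) : comb (ZG x n) :=
  match pselect (n = 0%N /\ cm_op uv.1 uv.2 = x) with
  | left h => csingle (exist _ uv h)
  | right _ => [::]
  end.

Definition ZM : pdga M := {|
  G := ZG;
  rel := fun _ _ _ => False;
  push := fun x y n g => zmk (cm_op x y) n (cm_op y (sval g).1, (sval g).2);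
  dif := fun x n g => [::];
  mul := fun x y m n g h =>
           zmk (cm_op x y) (m + n) (cm_op (sval g).1 (sval h).1, cm_op (sval g).2 (sval h).2);
  unit := fun x => zmk x 0 (x, cm_e);
  aug := fun x g => 1 |}.
End ZM.

Section Cohomology.
Variables (M : comMonoid) (P : pdga M) (A : HMmodule M).

Definition cochain_fun (n : nat) := forall x : M, G P x n -> A x.

(* an HM-module map P_n -> A: kills the relations and is natural *)
Definition is_cochain (n : nat) (f : cochain_fun n) : Prop :=
  (forall x (c : comb (G P x n)), rel P c -> ceval (f x) c = 0) /\
  (forall x y (g : G P x n),
      ceval (f (cm_op x y)) (push P y g) = @hm_act M A x y (cm_op x y) (erefl (cm_op x y)) (f x g)).

(* coboundary delta f = f o d (the sign convention does not affect
   cocycles or coboundaries) *)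
Definition delta (n : nat) (f : cochain_fun n) : cochain_fun n.+1 :=
  fun x g => ceval (f x) (dif P g).
Arguments delta {n} f x g.

Definition is_cocycle (n : nat) (f : cochain_fun n) : Prop :=
  is_cochain f /\ forall x g, delta f x g = 0.

Definition is_coboundary (n : nat) : cochain_fun n -> Prop :=
  match n with
  | 0 => fun f => forall x g, f x g = 0
  | m.+1 => fun f => exists2 h : cochain_fun m, is_cochain h & f = delta h
  end.

Definition cfadd (n : nat) (f g : cochain_fun n) : cochain_fun n :=
  fun x a => f x a + g x a.

(* H^n(Hom_HM(P,A)) is isomorphic to V: there is a group homomorphism
   from the n-cocycles onto V whose kernel is the n-coboundaries. *)
Definition cohom_iso (n : nat) (V : zmodType) : Prop :=
  exists phi : cochain_fun n -> V,
    [/\ forall f g, is_cocycle f -> is_cocycle g -> phi (cfadd f g) = phi f + phi g,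
        forall v, exists2 f, is_cocycle f & phi f = v
      & forall f, is_cocycle f -> (phi f = 0 <-> is_coboundary f)].
End Cohomology.

(* H^n(M,r;A) = H^n(Hom_HM(B^r(ZM), A)) *)
Definition BrZM (M : comMonoid) (r : nat) : pdga M := iter r (@Bar M) (ZM M).

From mathcomp Require Import zify.
From mathcomp Require Import all_boot all_algebra.
From mathcomp Require boolp.
Set Implicit Arguments.
Unset Strict Implicit.
Unset Printing Implicit Defensive.
Import GRing.Theory.
Local Open Scope ring_scope.

(* In degree 0 the bar construction B(P) has exactly one generator over each
   object, the empty word [], and y_*[] = []. Every generating relation of
   B(P) lives in word length at least 1, so none survives in degree 0, and
   d[a] = e(a) x_*[] - e(a) x_*[] vanishes. Hence a 0-cochain is a natural
   map from the constant module Z to A, automatically a cocycle, and it is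
   determined by its value at [] over e: H^0(Hom(B(P), A)) = A(e) for every
   P, in particular for B^r(ZM) = B(B^(r-1)(ZM)) with r >= 1. *)

Section BarDegreeZero.
Variables (M : comMonoid) (P : pdga M).

Definition bar_empty (x : M) : BG P x 0 := exist _ [::] (conj erefl I).

Lemma bar0E x (g : BG P x 0) : g = bar_empty x.
Proof.
case: g => [[|a s] [hw hc]] //; case: hc.
by rewrite /bar_empty (eq_irrelevance hw erefl).
Qed.

Lemma bmk_nil0 x : @bmk _ P x 0 [::] = csingle (bar_empty x).
Proof.
rewrite /bmk; case: boolp.pselect => [h|h]; first by rewrite (bar0E (exist _ _ h)).
by case: h.
Qed.

Lemma bmk_cons0 x a s : @bmk _ P x 0 (a :: s) = [::].
Proof. by rewrite /bmk; case: boolp.pselect => // -[]. Qed.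

Lemma size_tens cs : all (fun p => size p.2 == size cs) (tens (P:=P) cs).
Proof.
elim: cs => [|c cs IH] //=.
elim: c => //= p c IHc; rewrite all_cat {}IHc andbT all_map.
by apply: sub_all IH => q /= /eqP ->.
Qed.

Lemma size_word_gt0 pre mid suf : (0 < size mid)%N ->
  all (fun p => 0 < size p.2)%N (word (P:=P) pre mid suf).
Proof.
move=> mid_gt0; apply: sub_all (size_tens _) => p /= /eqP ->.
by rewrite !size_cat; lia.
Qed.

Lemma blift0_nonempty x (c : comb (seq (gen P))) :
  all (fun p => 0 < size p.2)%N c -> @blift _ P x 0 c = [::].
Proof.
elim: c => [|[k s] c IH] //= /andP[s_gt0 /IH {}IH].
case: s s_gt0 => // a s _.
by rewrite -[blift _ _ _]/(cscale k (bmk x 0 (a :: s)) ++ blift x 0 c) bmk_cons0 IH.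
Qed.

Lemma blift0_rawrel x R : @rawrel _ P R -> @blift _ P x 0 R = [::].
Proof.
case=> [pre suf y k r _|pre suf y|pre suf u a b];
  apply: blift0_nonempty; try exact: size_word_gt0.
rewrite /csub all_cat size_word_gt0 //= /cscale all_map.
by apply: sub_all (@size_word_gt0 pre [:: csingle a; gpush u b] suf isT).
Qed.

Lemma ceval_dif_bar1 x (V : zmodType) (F : BG P x 0 -> V) (g : BG P x 1) :
  ceval F (@blift _ P x 0 (rdif (sval g))) = 0.
Proof.
case: g => [[|a [|b s]] [hw _]] //=.
case: a hw => y [[|k] g'] hw; last by move: hw; rewrite /wt /gdeg /=; lia.
rewrite /rdif /= hw /blift /cbind /= bmk_nil0 /ceval !big_cons big_nil /=.
by rewrite addr0 -mulrzDr /sgn expr1 !mulr1 mulN1r addrN mulr0z.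
Qed.

Lemma ceval_push_bar_empty x y (V : zmodType) (F : BG P (cm_op x y) 0 -> V) :
  ceval F (push (Bar P) y (bar_empty x : G (Bar P) x 0)) = F (bar_empty _).
Proof.
by rewrite /= /blift /cbind /= bmk_nil0 /ceval !big_cons big_nil /= mulr1 mulr1z addr0.
Qed.

End BarDegreeZero.

Section BarCohomologyZero.
Variables (M : comMonoid) (P : pdga M) (A : HMmodule M).

Lemma hm_act0 x y z (h : cm_op x y = z) : @hm_act M A x y z h 0 = 0.
Proof.
apply: (@addrI _ (hm_act h 0)).
by rewrite -hm_act_add !addr0.
Qed.

Lemma bar_cochain0_act (f : cochain_fun (Bar P) A 0) :
  is_cochain f -> forall x y z (h : cm_op x y = z),
  f z (bar_empty P z) = hm_act h (f x (bar_empty P x)).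
Proof.
by move=> [_ f_nat] x y z h; case: z / h; rewrite -f_nat ceval_push_bar_empty.
Qed.

Definition bar_cochain0_of (v : A cm_e) : cochain_fun (Bar P) A 0 :=
  fun x _ => hm_act (cm_unitl x) v.

Lemma bar_cochain0_of_cocycle v : is_cocycle (bar_cochain0_of v).
Proof.
split; first split.
- by move=> x c [R /(blift0_rawrel x) -> ->]; rewrite /ceval big_nil.
- move=> x y g; rewrite (bar0E g) ceval_push_bar_empty.
  by rewrite (hm_act_comp (cm_unitl x) (erefl (cm_op x y)) (cm_unitl (cm_op x y))).
- by move=> x g; apply: ceval_dif_bar1.
Qed.

Lemma bar_cohom0 : cohom_iso (Bar P) A 0 (A cm_e).
Proof.
exists (fun f : cochain_fun (Bar P) A 0 => f cm_e (bar_empty P cm_e)); split => //.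
- move=> v; exists (bar_cochain0_of v); first exact: bar_cochain0_of_cocycle.
  exact: hm_act_id.
- move=> f [f_cochain _]; split => [f_e0 x g|]; last exact.
  rewrite (bar0E g) (bar_cochain0_act f_cochain (cm_unitl x)).
  by rewrite f_e0 hm_act0.
Qed.

End BarCohomologyZero.

Theorem corollary5p5 (M : comMonoid) (A : HMmodule M) (r : nat) :
  (1 <= r)%N -> cohom_iso (BrZM M r) A 0 (A cm_e).
Proof. by case: r => // r _; apply: bar_cohom0. Qed.
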